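(* $\mathrm{sdi\text{-}dist}$ is a semantic distance metric for CQs, and in fact an ultrametric, i.e., for all CQs $q_1,q_2,q_3$ of the same arity, $\mathrm{sdi\text{-}dist}(q_1,q_3)\le\max(\mathrm{sdi\text{-}dist}(q_1,q_2),\mathrm{sdi\text{-}dist}(q_2,q_3))$.
   Context: CQs are $q(x_1,\dots,x_k)\text{ :- }\alpha_1,\dots,\alpha_n$ (relational atoms, no constants, each answer variable occurring in an atom); $q(I)$ is the answer set on a finite database instance $I$; $q_1,q_2$ are equivalent if $q_1(I)=q_2(I)$ for all $I$. For CQs $q_1,q_2$ of the same arity, $\mathrm{sdi\text{-}dist}(q_1,q_2)=1/n$ where $n$ is the minimum number of facts of an instance $I$ with $q_1(I)\ne q_2(I)$, and $\mathrm{sdi\text{-}dist}(q_1,q_2)=0$ if no such instance exists. A semantic distance metric for CQs is a function $\mathrm{dist}$ from pairs of same-arity CQs to non-negative reals with $\mathrm{dist}(q_1,q_2)=\mathrm{dist}(q_2,q_1)$; $\mathrm{dist}(q_1,q_2)=0$ iff $q_1,q_2$ are equivalent; and $\mathrm{dist}(q_1,q_2)\le\mathrm{dist}(q_1,q_3)+\mathrm{dist}(q_3,q_2)$. *)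

From HB Require Import structures.
From mathcomp Require Import all_boot all_order all_algebra.
From mathcomp Require Import boolp reals.
Set Implicit Arguments. Unset Strict Implicit. Unset Printing Implicit Defensive.
Import Order.TTheory GRing.Theory Num.Theory.
Local Open Scope ring_scope.

Section CQs.
(* A relational schema: relation symbols [Sig] with arities [ar].
   Variables and constants are both drawn from [nat]. *)
Variables (Sig : eqType) (ar : Sig -> nat).

Definition atom := (Sig * seq nat)%type.

(* A CQ q(x_1,...,x_k) :- alpha_1,...,alpha_n : head = answer variables
   (x_1,...,x_k), body = the atoms. No constants. *)
Record CQ := mkCQ { head : seq nat; body : seq atom }.

Definition wf_CQ (q : CQ) : bool :=
  [&& body q != [::],
      all (fun a : atom => size a.2 == ar a.1) (body q) &
      all (fun x => has (fun a : atom => x \in a.2) (body q)) (head q)].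

Definition arity (q : CQ) : nat := size (head q).

Definition fact := (Sig * seq nat)%type.
Definition instance := seq fact.
Definition wf_instance (I : instance) : bool :=
  all (fun f : fact => size f.2 == ar f.1) I.
Definition nfacts (I : instance) : nat := size (undup I).

Definition answers (q : CQ) (I : instance) (t : seq nat) : Prop :=
  exists h : nat -> nat,
    (forall a, a \in body q -> ((a.1, map h a.2) : fact) \in I) /\
    map h (head q) = t.

Definition same_answers (q1 q2 : CQ) (I : instance) : Prop :=
  forall t, answers q1 I t <-> answers q2 I t.

Definition equivalent (q1 q2 : CQ) : Prop :=
  forall I, wf_instance I -> same_answers q1 q2 I.

Definition differ_at (q1 q2 : CQ) (n : nat) : Prop :=
  exists I, wf_instance I /\ nfacts I = n /\ ~ same_answers q1 q2 I.

Lemma differ_at_bool (q1 q2 : CQ) :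
  (exists n, differ_at q1 q2 n) -> exists n, `[< differ_at q1 q2 n >].
Proof. by case=> n Hn; exists n; apply/asboolP. Qed.

Definition sdi_dist {R : realType} (q1 q2 : CQ) : R :=
  match pselect (exists n, differ_at q1 q2 n) with
  | left H => ((ex_minn (differ_at_bool H))%:R)^-1
  | right _ => 0
  end.

Definition semantic_distance_metric {R : realType} (dist : CQ -> CQ -> R) : Prop :=
  (forall q1 q2, wf_CQ q1 -> wf_CQ q2 -> arity q1 = arity q2 ->
     0 <= dist q1 q2) /\
  (forall q1 q2, wf_CQ q1 -> wf_CQ q2 -> arity q1 = arity q2 ->
     dist q1 q2 = dist q2 q1) /\
  (forall q1 q2, wf_CQ q1 -> wf_CQ q2 -> arity q1 = arity q2 ->
     (dist q1 q2 = 0 <-> equivalent q1 q2)) /\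
  (forall q1 q2 q3, wf_CQ q1 -> wf_CQ q2 -> wf_CQ q3 ->
     arity q1 = arity q2 -> arity q1 = arity q3 ->
     dist q1 q2 <= dist q1 q3 + dist q3 q2).

Definition ultrametric {R : realType} (dist : CQ -> CQ -> R) : Prop :=
  forall q1 q2 q3, wf_CQ q1 -> wf_CQ q2 -> wf_CQ q3 ->
    arity q1 = arity q2 -> arity q2 = arity q3 ->
    dist q1 q3 <= Num.max (dist q1 q2) (dist q2 q3).

End CQs.

From HB Require Import structures.
From mathcomp Require Import all_boot all_order all_algebra.
From mathcomp Require Import boolp reals.
Set Implicit Arguments. Unset Strict Implicit. Unset Printing Implicit Defensive.
Import Order.TTheory GRing.Theory Num.Theory.
Local Open Scope ring_scope.

(* An instance on which q1 and q3 disagree makes q1, q2 or q2, q3 disagree,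
   so the least size of an instance distinguishing q1 and q3 is at least the
   smaller of the two other least sizes; inverting gives the ultrametric
   inequality, and with nonnegativity the triangle inequality. The empty
   instance gives no answers to a CQ with a nonempty body, so distinguishing
   instances are nonempty and 1/n is positive: the distance vanishes exactly
   on equivalent queries. *)

Section SdiDist.
Variables (R : realType) (Sig : eqType) (ar : Sig -> nat).
Implicit Types (q : CQ Sig) (I : instance Sig).

Lemma answers_nil q t : wf_CQ ar q -> ~ answers q [::] t.
Proof.
case/and3P=> + _ _ [h [hI _]].
by case: (body q) hI => [//|a s] /(_ a); rewrite mem_head => /(_ isT).
Qed.

Lemma same_answersC q1 q2 I : same_answers q1 q2 I -> same_answers q2 q1 I.
Proof. by move=> h12 t; rewrite h12. Qed.

Lemma differ_atC q1 q2 n : differ_at ar q1 q2 n -> differ_at ar q2 q1 n.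
Proof.
by case=> I [wI [nI h12]]; exists I; do 2!split=> //; move/same_answersC.
Qed.

Lemma differ_at_gt0 q1 q2 n : wf_CQ ar q1 -> wf_CQ ar q2 ->
  differ_at ar q1 q2 n -> (0 < n)%N.
Proof.
move=> w1 w2 [[|f I] [_ [<- h12]]].
  by case: h12 => t; split=> [/(answers_nil w1)|/(answers_nil w2)].
have : f \in undup (f :: I) by rewrite mem_undup mem_head.
by rewrite /nfacts; case: undup.
Qed.

Lemma differ_at_split q1 q2 q3 n : differ_at ar q1 q3 n ->
  differ_at ar q1 q2 n \/ differ_at ar q2 q3 n.
Proof.
case=> I [wI [nI h13]].
have [h12|h12] := pselect (same_answers q1 q2 I); last by left; exists I.
right; exists I; split=> //; split=> // h23.
by apply: h13 => t; rewrite h12 h23.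
Qed.

Lemma equivalentP q1 q2 :
  equivalent ar q1 q2 <-> ~ exists n, differ_at ar q1 q2 n.
Proof.
split=> [equiv [n [I [wI [_ h12]]]]|nodiff I wI]; first exact/h12/equiv.
have [//|h12] := pselect (same_answers q1 q2 I).
by case: nodiff; exists (nfacts I), I.
Qed.

Variant sdi_dist_spec q1 q2 : R -> Prop :=
  | SdiDistNone of ~ (exists n, differ_at ar q1 q2 n) : sdi_dist_spec q1 q2 0
  | SdiDistMin m of differ_at ar q1 q2 m
      & (forall k, differ_at ar q1 q2 k -> m <= k)%N :
      sdi_dist_spec q1 q2 m%:R^-1.

Lemma sdi_distP q1 q2 : sdi_dist_spec q1 q2 (sdi_dist ar q1 q2).
Proof.
rewrite /sdi_dist; case: pselect => [ex|nex]; last exact: SdiDistNone.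
case: ex_minnP => m /asboolP dm minm.
by apply: SdiDistMin => // k dk; apply/minm/asboolP.
Qed.

Lemma sdi_dist_ge0 q1 q2 : 0 <= sdi_dist (R:=R) ar q1 q2.
Proof. by case: sdi_distP => // m _ _; rewrite invr_ge0 ler0n. Qed.

Lemma sdi_distC q1 q2 : sdi_dist (R:=R) ar q1 q2 = sdi_dist ar q2 q1.
Proof.
case: sdi_distP => [n12|m d12 min12]; case: sdi_distP => [n21|k d21 min21] //.
- by case: n12; exists k; apply: differ_atC.
- by case: n21; exists m; apply: differ_atC.
suff -> : m = k by [].
by apply/eqP; rewrite eqn_leq min12 ?min21 //; apply: differ_atC.
Qed.

Lemma sdi_dist_eq0 q1 q2 : wf_CQ ar q1 -> wf_CQ ar q2 ->
  sdi_dist (R:=R) ar q1 q2 = 0 <-> equivalent ar q1 q2.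
Proof.
move=> w1 w2; rewrite equivalentP; case: sdi_distP => [//|m d12 _].
have m_gt0 := differ_at_gt0 w1 w2 d12.
split=> [/eqP|nodiff]; last by case: nodiff; exists m.
by rewrite invr_eq0 pnatr_eq0 eqn0Ngt m_gt0.
Qed.

Lemma sdi_dist_ge_inv q1 q2 n : wf_CQ ar q1 -> wf_CQ ar q2 ->
  differ_at ar q1 q2 n -> n%:R^-1 <= sdi_dist (R:=R) ar q1 q2.
Proof.
move=> w1 w2 dn; case: sdi_distP => [nodiff|m dm minm].
  by case: nodiff; exists n.
have m_gt0 := differ_at_gt0 w1 w2 dm.
by rewrite lef_pV2 ?posrE ?ltr0n ?(leq_trans m_gt0) ?ler_nat ?minm.
Qed.

Lemma sdi_dist_ultra q1 q2 q3 : wf_CQ ar q1 -> wf_CQ ar q2 -> wf_CQ ar q3 ->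
  sdi_dist (R:=R) ar q1 q3 <=
  Num.max (sdi_dist ar q1 q2) (sdi_dist ar q2 q3).
Proof.
move=> w1 w2 w3; rewrite le_max; case: sdi_distP => [_|m d13 _].
  by rewrite sdi_dist_ge0.
case: (differ_at_split q2 d13) => [d12|d23].
  by rewrite (sdi_dist_ge_inv w1 w2 d12).
by rewrite (sdi_dist_ge_inv w2 w3 d23) orbT.
Qed.

End SdiDist.

Theorem proposition44 (R : realType) (Sig : eqType) (ar : Sig -> nat) :
  semantic_distance_metric ar (sdi_dist (R:=R) ar) /\
  ultrametric ar (sdi_dist (R:=R) ar).
Proof.
split; last by move=> q1 q2 q3 w1 w2 w3 _ _; apply: sdi_dist_ultra.
split; first by move=> q1 q2 _ _ _; apply: sdi_dist_ge0.
split; first by move=> q1 q2 _ _ _; apply: sdi_distC.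
split; first by move=> q1 q2 w1 w2 _; apply: sdi_dist_eq0.
move=> q1 q2 q3 w1 w2 w3 _ _.
apply: le_trans (sdi_dist_ultra R w1 w3 w2) _.
by rewrite ge_max lerDl lerDr !sdi_dist_ge0.
Qed.
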